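(* Let $K$ be such that $A+BK$ is Schur stable, and let $\mathcal{S}=\{\sigma\in\mathbf{C}: A+(1-\sigma)LC \text{ is Schur stable}\}$ be the consensus region. Let $\mathcal{G}\in\Gamma_N$ with eigenvalues $1,\lambda_2,\dots,\lambda_N$ of $\mathcal{D}$, where $|\lambda_i|<1$ for $i\ge2$. If $\lambda_i\in\mathcal{S}$ for all $i=2,\dots,N$, then the agents reach consensus under the protocol: for all initial conditions, $\|x_i(k)-x_j(k)\|\to0$ for all $i,j$.
   Context: Agents: $x_i(k+1)=Ax_i(k)+Bu_i(k)$, $y_i=Cx_i$, $i=1,\dots,N$, with $A\in\mathbf{R}^{n\times n}$, $B\in\mathbf{R}^{n\times p}$, $C\in\mathbf{R}^{q\times n}$. For a directed graph $\mathcal{G}$ on nodes $\{1,\dots,N\}$, its row-stochastic matrix $\mathcal{D}=(d_{ij})$ satisfies $d_{ii}>0$, $d_{ij}>0$ for $j\ne i$ iff $(j,i)$ is an edge, $d_{ij}=0$ otherwise, $\sum_jd_{ij}=1$. $\Gamma_N$ is the set of directed graphs on $N$ nodes containing a directed spanning tree. Protocol with $K\in\mathbf{R}^{p\times n}$, $L\in\mathbf{R}^{n\times q}$: $\zeta_i=\sum_j d_{ij}(y_i-y_j)$, $v_i(k+1)=(A+BK)v_i(k)+L\big(\sum_j d_{ij}C(v_i-v_j)-\zeta_i\big)$, $u_i=Kv_i$. Schur stable: all eigenvalues of modulus $<1$. *)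

(* The scalar field is an arbitrary Archimedean numeric closed
   field F (e.g. the complex numbers); "real" objects are those with entries in
   Num.real. *)
From HB Require Import structures.
From mathcomp Require Import all_boot all_order all_algebra all_fingroup.
Set Implicit Arguments. Unset Strict Implicit. Unset Printing Implicit Defensive.
Import Order.TTheory GRing.Theory Num.Theory.
Local Open Scope ring_scope.

Definition schur_stable (F : archiClosedFieldType) (n : nat) (M : 'M[F]_n) : Prop :=
  forall lam : F, eigenvalue M lam -> `|lam| < 1.

Definition real_mx (F : archiClosedFieldType) (m n : nat) (M : 'M[F]_(m, n)) : Prop :=
  forall i j, M i j \is Num.real.

(* Directed graph on nodes 'I_N: E j i means (j,i) is an edge (j -> i). *)
Definition has_spanning_tree (N : nat) (E : rel 'I_N) : Prop :=
  exists r : 'I_N, forall i : 'I_N, connect E r i.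

Definition row_stochastic_of (F : archiClosedFieldType) (N : nat)
    (E : rel 'I_N) (D : 'M[F]_N) : Prop :=
  [/\ forall i, 0 < D i i,
      forall i j, i != j -> (0 < D i j <-> E j i),
      forall i j, i != j -> ~~ E j i -> D i j = 0,
      forall i j, D i j \is Num.real
    & forall i, \sum_j D i j = 1].

Definition vnorm (F : archiClosedFieldType) (n : nat) (v : 'cV[F]_n) : F :=
  sqrtC (\sum_i `|v i 0| ^+ 2).

Definition tends_to_0 (F : archiClosedFieldType) (u : nat -> F) : Prop :=
  forall eps : F, 0 < eps -> exists k0 : nat, forall k : nat, (k0 <= k)%N -> `|u k| < eps.

Definition protocol_traj (F : archiClosedFieldType) (n p q N : nat)
    (A : 'M[F]_n) (B : 'M[F]_(n, p)) (C : 'M[F]_(q, n))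
    (K : 'M[F]_(p, n)) (L : 'M[F]_(n, q)) (D : 'M[F]_N)
    (x v : nat -> 'I_N -> 'cV[F]_n) : Prop :=
  forall (k : nat) (i : 'I_N),
    let y := fun j => C *m x k j in
    let u := K *m v k i in
    let zeta := \sum_j D i j *: (y i - y j) in
    x k.+1 i = A *m x k i + B *m u /\
    v k.+1 i = (A + B *m K) *m v k i
               + L *m (\sum_j D i j *: (C *m (v k i - v k j)) - zeta).

From HB Require Import structures.
From mathcomp Require Import all_boot all_order all_algebra all_fingroup.
From mathcomp Require Import ring.
Set Implicit Arguments. Unset Strict Implicit. Unset Printing Implicit Defensive.
Import Order.TTheory GRing.Theory Num.Theory.
Local Open Scope ring_scope.

(* The observer errors e_i = v_i - x_i evolve on their own:
   e_i' = A e_i + L C sum_j d_ij (e_i - e_j).  In the relative coordinates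
   e_i - e_0 (i >= 1) this reads Z' = A Z + L C Z (I - D')^T, where the reduced
   matrix D' of the row-stochastic D has spectrum lam_2, ..., lam_N.  A Schur
   triangularisation of D' turns this into a cascade of systems with matrices
   A + (1 - lam_i) L C, all Schur stable, so the errors reach consensus.  Then
   x_i - x_j is driven through the Schur-stable A + B K by B K (e_i - e_j) and
   tends to 0 as well. *)

Section TendsTo0.
Variable F : archiClosedFieldType.
Implicit Types (u w s : nat -> F).

Lemma tends_to_0_ext u w : (forall k, u k = w k) -> tends_to_0 u -> tends_to_0 w.
Proof. by move=> e h eps /h [k0 Hk]; exists k0 => k /Hk; rewrite e. Qed.

Lemma tends_to_0_eventually0 u k0 : (forall k, (k0 <= k)%N -> u k = 0) -> tends_to_0 u.
Proof. by move=> u0 eps He; exists k0 => k /u0 ->; rewrite normr0. Qed.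

Lemma tends_to_0D u w : tends_to_0 u -> tends_to_0 w -> tends_to_0 (fun k => u k + w k).
Proof.
move=> hu hw eps He.
have He2 : 0 < eps / 2 by rewrite divr_gt0.
have [k1 H1] := hu _ He2; have [k2 H2] := hw _ He2.
exists (maxn k1 k2) => k; rewrite geq_max => /andP[/H1 h1 /H2 h2].
by apply: le_lt_trans (ler_normD _ _) _; rewrite [eps]splitr ltrD.
Qed.

Lemma tends_to_0M u w : tends_to_0 u -> tends_to_0 w -> tends_to_0 (fun k => u k * w k).
Proof.
move=> hu hw eps e0.
have [k1 H1] := hu _ ltr01; have [k2 H2] := hw _ e0.
exists (maxn k1 k2) => k; rewrite geq_max => /andP[/H1 h1 /H2 h2].
by rewrite normrM -[eps]mul1r ltr_pM.
Qed.

Lemma tends_to_0Ml (a : F) u : tends_to_0 u -> tends_to_0 (fun k => a * u k).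
Proof.
have [->|a0] := eqVneq a 0.
  by move=> _; apply: (tends_to_0_eventually0 (k0 := 0)) => k _; rewrite mul0r.
move=> hu eps He.
have Ha : 0 < `|a| by rewrite normr_gt0.
have [k0 H0] := hu (eps / `|a|) (divr_gt0 He Ha).
by exists k0 => k /H0; rewrite ltr_pdivlMr // mulrC normrM.
Qed.

Lemma tends_to_0_sum (I : Type) (r : seq I) (P : pred I) (f : I -> nat -> F) :
  (forall i, P i -> tends_to_0 (f i)) ->
  tends_to_0 (fun k => \sum_(i <- r | P i) f i k).
Proof.
move=> hf; elim: r => [|i r IH].
  by apply: (tends_to_0_eventually0 (k0 := 0)) => k _; rewrite big_nil.
case Pi: (P i); last by apply: tends_to_0_ext IH => k; rewrite big_cons Pi.
by apply: tends_to_0_ext (tends_to_0D (hf _ Pi) IH) => k; rewrite big_cons Pi.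
Qed.

Lemma tends_to_0_norm u : tends_to_0 u -> tends_to_0 (fun k => `|u k|).
Proof. by move=> hu eps /hu [k0 H]; exists k0 => k /H; rewrite normr_id. Qed.

Lemma tends_to_0_sqrtC u :
  (forall k, 0 <= u k) -> tends_to_0 u -> tends_to_0 (fun k => sqrtC (u k)).
Proof.
move=> u0 hu eps e0.
have [k0 H] := hu (eps ^+ 2) (exprn_gt0 2 e0).
exists k0 => k /H; rewrite !ger0_norm ?sqrtC_ge0 ?u0 // => h.
by rewrite -[eps](sqrCK (ltW e0)) ltr_sqrtC // nnegrE ?u0 // exprn_ge0 // ltW.
Qed.

Lemma bernoulli_ineq (h : F) (m : nat) : 0 <= h -> 1 + h *+ m <= (1 + h) ^+ m.
Proof.
move=> h0; elim: m => [|m IH]; first by rewrite mulr0n addr0 expr0.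
have -> : 1 + h *+ m.+1 = (1 + h *+ m) * (1 + h) - h *+ m * h.
  by rewrite mulrDr mulr1 mulrDl mul1r mulrSr; ring.
rewrite exprSr; apply: le_trans (_ : _ <= (1 + h *+ m) * (1 + h)) _.
  by rewrite gerBl mulr_ge0 ?mulrn_wge0.
by rewrite ler_wpM2r // addr_ge0.
Qed.

Lemma tends_to_0_geometric (c : F) : `|c| < 1 -> tends_to_0 (fun m => c ^+ m).
Proof.
move=> c1; have [->|c0] := eqVneq c 0.
  by apply: (tends_to_0_eventually0 (k0 := 1)) => -[|m] //; rewrite expr0n.
have cp : 0 < `|c| by rewrite normr_gt0.
have [h hp ch] : exists2 h : F, 0 < h & `|c| = (1 + h)^-1.
  by exists (`|c|^-1 - 1); rewrite ?subr_gt0 ?invf_gt1 // addrC subrK invrK.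
move=> eps e0; exists (Num.Def.archi_bound ((h * eps)^-1)) => m hm.
have mp : (h * eps)^-1 < m%:R.
  apply: lt_le_trans (archi_boundP _) _; first by rewrite invr_ge0 ltW ?mulr_gt0.
  by rewrite ler_nat.
have hm1 : 1 < h * eps * m%:R.
  by move: mp; rewrite -[X in X < _]mulr1 ltr_pdivrMl ?mulr_gt0.
rewrite normrX ch exprVn invf_plt ?posrE ?exprn_gt0 ?addr_gt0 //.
rewrite -[eps^-1]mulr1 ltr_pdivrMl //; apply: lt_le_trans hm1 _.
rewrite -mulrA mulrCA ler_pM2l // mulr_natr.
by apply: le_trans (bernoulli_ineq m (ltW hp)); rewrite lerDr.
Qed.

Lemma scalar_rec_tends_to_0 (d : F) u s : `|d| < 1 -> tends_to_0 u ->
  (forall k, s k.+1 = d * s k + u k) -> tends_to_0 s.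
Proof.
move=> d1 hu hs eps e0.
have e2 : 0 < eps / 2 by rewrite divr_gt0.
have [k1 H1] : exists k1, forall k, (k1 <= k)%N -> `|u k| < (1 - `|d|) * (eps / 2).
  by apply: hu; rewrite mulr_gt0 ?subr_gt0.
have bnd m : `|s (k1 + m)%N| <= `|d| ^+ m * `|s k1| + eps / 2.
  elim: m => [|m IH]; first by rewrite addn0 expr0 mul1r lerDl ltW.
  rewrite addnS hs; apply: le_trans (ler_normD _ _) _.
  have -> : `|d| ^+ m.+1 * `|s k1| + eps / 2 =
      `|d| * (`|d| ^+ m * `|s k1| + eps / 2) + (1 - `|d|) * (eps / 2).
    by rewrite exprS; ring.
  by rewrite normrM lerD ?ler_wpM2l // ltW // H1 // leq_addr.
have [m0 Hm] := tends_to_0Ml `|s k1| (tends_to_0_geometric d1) e2.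
exists (k1 + m0)%N => k hk; rewrite -(subnKC (leq_trans (leq_addr _ _) hk)).
apply: le_lt_trans (bnd _) _; rewrite {2}[eps]splitr ltrD2r.
apply: le_lt_trans (Hm (k - k1)%N _); first by rewrite normrM normrX normr_id mulrC.
by rewrite leq_subRL ?(leq_trans (leq_addr _ _) hk) // addnC.
Qed.

End TendsTo0.

Section MatrixSequences.
Variable F : archiClosedFieldType.

Definition mx_tends_to_0 m n (Z : nat -> 'M[F]_(m, n)) :=
  forall i j, tends_to_0 (fun k => Z k i j).

Lemma mx_tends_to_0_ext m n (Z W : nat -> 'M[F]_(m, n)) :
  (forall k, Z k = W k) -> mx_tends_to_0 Z -> mx_tends_to_0 W.
Proof. by move=> e h i j; apply: tends_to_0_ext (h i j) => k; rewrite e. Qed.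

Lemma mx_tends_to_0D m n (Z W : nat -> 'M[F]_(m, n)) :
  mx_tends_to_0 Z -> mx_tends_to_0 W -> mx_tends_to_0 (fun k => Z k + W k).
Proof.
move=> hZ hW i j; apply: tends_to_0_ext (tends_to_0D (hZ i j) (hW i j)) => k.
by rewrite mxE.
Qed.

Lemma mx_tends_to_0Zl m n (a : F) (Z : nat -> 'M[F]_(m, n)) :
  mx_tends_to_0 Z -> mx_tends_to_0 (fun k => a *: Z k).
Proof.
by move=> hZ i j; apply: tends_to_0_ext (tends_to_0Ml a (hZ i j)) => k; rewrite mxE.
Qed.

Lemma mx_tends_to_0B m n (Z W : nat -> 'M[F]_(m, n)) :
  mx_tends_to_0 Z -> mx_tends_to_0 W -> mx_tends_to_0 (fun k => Z k - W k).
Proof.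
move=> hZ /(mx_tends_to_0Zl (-1)) hW.
by apply: mx_tends_to_0_ext (mx_tends_to_0D hZ hW) => k; rewrite scaleN1r.
Qed.

Lemma mx_tends_to_0_sum m n (I : Type) (r : seq I) (P : pred I)
    (Z : I -> nat -> 'M[F]_(m, n)) :
  (forall c, P c -> mx_tends_to_0 (Z c)) ->
  mx_tends_to_0 (fun k => \sum_(c <- r | P c) Z c k).
Proof.
move=> hZ i j.
have := @tends_to_0_sum F I r P (fun c k => Z c k i j) (fun c Pc => hZ c Pc i j).
by apply: tends_to_0_ext => k; rewrite summxE.
Qed.

Lemma mx_tends_to_0_mull m n p (X : 'M[F]_(p, m)) (Z : nat -> 'M[F]_(m, n)) :
  mx_tends_to_0 Z -> mx_tends_to_0 (fun k => X *m Z k).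
Proof.
move=> hZ i j.
have := @tends_to_0_sum F _ (index_enum 'I_m) predT (fun l k => X i l * Z k l j)
  (fun l _ => tends_to_0Ml (X i l) (hZ l j)).
by apply: tends_to_0_ext => k; rewrite mxE.
Qed.

Lemma mx_tends_to_0_mulr m n p (X : 'M[F]_(n, p)) (Z : nat -> 'M[F]_(m, n)) :
  mx_tends_to_0 Z -> mx_tends_to_0 (fun k => Z k *m X).
Proof.
move=> hZ i j.
have := @tends_to_0_sum F _ (index_enum 'I_n) predT (fun l k => X l j * Z k i l)
  (fun l _ => tends_to_0Ml (X l j) (hZ i l)).
by apply: tends_to_0_ext => k; rewrite mxE; apply: eq_bigr => l _; rewrite mulrC.
Qed.

Lemma mx_tends_to_0_col m n (Z : nat -> 'M[F]_(m, n)) :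
  (forall a, mx_tends_to_0 (fun k => col a (Z k))) -> mx_tends_to_0 Z.
Proof. by move=> hZ i j; apply: tends_to_0_ext (hZ j i 0) => k; rewrite mxE. Qed.

Lemma vnorm_tends_to_0 n (X : nat -> 'cV[F]_n) :
  mx_tends_to_0 X -> tends_to_0 (fun k => vnorm (X k)).
Proof.
move=> hX; apply: tends_to_0_sqrtC => [k|].
  by apply: sumr_ge0 => r _; rewrite exprn_ge0.
apply: tends_to_0_sum => r _.
have hr := tends_to_0_norm (hX r 0).
by apply: tends_to_0_ext (tends_to_0M hr hr) => k; rewrite expr2.
Qed.

End MatrixSequences.

Lemma trigonalization (C : numClosedFieldType) n (M : 'M[C]_n) : (0 < n)%N ->
  exists P T, [/\ P \in unitmx, P *m M = T *m P, is_trig_mx T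
                & forall i, eigenvalue M (T i i)].
Proof.
move=> n_gt0; have [P /unitarymx_unit Pu Ptrig] := Schur M n_gt0.
exists P, (conjmx P M); split=> //; first exact/(similarP Pu)/eqP.
move=> i; apply: (eigenvalue_conjmx (stablemx_unit _ Pu)); first by rewrite row_free_unit.
by rewrite [_ \in _]eigenvalue_root_char char_poly_trig // (bigD1 i) //= rootM root_XsubC eqxx.
Qed.

Lemma eq_mx_col (R : Type) m n (X Y : 'M[R]_(m, n)) :
  (forall j, col j X = col j Y) -> X = Y.
Proof. by move=> XY; apply: trmx_inj; apply/row_matrixP => j; rewrite -!tr_col XY. Qed.

Lemma col_mulmx (R : pzSemiRingType) m n p (X : 'M[R]_(m, n)) (Y : 'M[R]_(n, p)) j :
  col j (X *m Y) = X *m col j Y.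
Proof. by rewrite !colE mulmxA. Qed.

Lemma col_mul_trmx (R : comPzRingType) n N (H : 'M[R]_(n, N)) (X : 'M[R]_N) a :
  col a (H *m X^T) = \sum_c X a c *: col c H.
Proof.
apply/matrixP => i j; rewrite !mxE summxE.
by apply: eq_bigr => c _; rewrite !mxE mulrC.
Qed.

Lemma col_sub1_mul_trmx (R : comPzRingType) n N (H : 'M[R]_(n, N)) (T : 'M[R]_N) a :
  col a (H *m (1%:M - T)^T) =
  (1 - T a a) *: col a H + \sum_(c | c != a) (- T a c) *: col c H.
Proof.
rewrite col_mul_trmx (bigD1 a) //= !mxE eqxx; congr (_ + _).
by apply: eq_bigr => c ca; rewrite !mxE eq_sym (negbTE ca) sub0r.
Qed.

Section StableRecurrences.
Variable F : archiClosedFieldType.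

Lemma trig_rec_tends_to_0 n m (T : 'M[F]_n) (Z W : nat -> 'M[F]_(n, m)) :
  is_trig_mx T -> (forall i, `|T i i| < 1) -> mx_tends_to_0 W ->
  (forall k, Z k.+1 = T *m Z k + W k) -> mx_tends_to_0 Z.
Proof.
move=> /is_trig_mxP Ttrig Tdiag hW hZ.
suff IH p (i : 'I_n) : (i < p)%N -> forall j, tends_to_0 (fun k => Z k i j).
  by move=> i; apply: (IH i.+1).
elim: p i => [|p IH] i //; rewrite ltnS leq_eqVlt => /orP[/eqP ip | /IH //] j.
apply: (@scalar_rec_tends_to_0 _ (T i i)
          (fun k => \sum_(l | l != i) T i l * Z k l j + W k i j)).
- exact: Tdiag.
- apply: tends_to_0D (hW i j); apply: tends_to_0_sum => l li.
  have [le_li | lt_il] := leqP l i.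
    by apply: tends_to_0Ml; apply: IH; rewrite -ip ltn_neqAle li le_li.
  by apply: (@tends_to_0_eventually0 _ _ 0) => k _; rewrite Ttrig // mul0r.
- by move=> k; rewrite hZ !mxE (bigD1 i) //= addrA.
Qed.

Lemma schur_stable_rec_tends_to_0 n m (M : 'M[F]_n) (Z W : nat -> 'M[F]_(n, m)) :
  schur_stable M -> mx_tends_to_0 W ->
  (forall k, Z k.+1 = M *m Z k + W k) -> mx_tends_to_0 Z.
Proof.
case: n => [|n] in M Z W * => hM hW hZ; first by case.
have [P [T [Pu PM Ttrig Teig]]] := trigonalization M (ltn0Sn n).
have hPZ : mx_tends_to_0 (fun k => P *m Z k).
  apply: (trig_rec_tends_to_0 Ttrig (fun i => hM _ (Teig i)) (mx_tends_to_0_mull P hW)).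
  by move=> k; rewrite hZ mulmxDr !mulmxA PM.
apply: mx_tends_to_0_ext (mx_tends_to_0_mull (invmx P) hPZ) => k.
by rewrite mulmxA mulVmx // mul1mx.
Qed.

Lemma trig_coupled_rec_tends_to_0 n N (A M : 'M[F]_n) (T : 'M[F]_N)
    (Z : nat -> 'M[F]_(n, N)) :
  is_trig_mx T -> (forall a, schur_stable (A + (1 - T a a) *: M)) ->
  (forall k, Z k.+1 = A *m Z k + M *m (Z k *m (1%:M - T)^T)) -> mx_tends_to_0 Z.
Proof.
move=> /is_trig_mxP Ttrig hS hZ; apply: mx_tends_to_0_col.
suff IH p (a : 'I_N) : (a < p)%N -> mx_tends_to_0 (fun k => col a (Z k)).
  by move=> a; apply: (IH a.+1).
elim: p a => [|p IH] a //; rewrite ltnS leq_eqVlt => /orP[/eqP ap | /IH //].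
pose W k := M *m \sum_(c | c != a) (- T a c) *: col c (Z k).
apply: (schur_stable_rec_tends_to_0 (W := W) (hS a)).
  apply: mx_tends_to_0_mull; apply: mx_tends_to_0_sum => c ca.
  have [le_ca | lt_ac] := leqP c a.
    by apply: mx_tends_to_0Zl; apply: IH; rewrite -ap ltn_neqAle ca le_ca.
  move=> i j; apply: (@tends_to_0_eventually0 _ _ 0) => k _.
  by rewrite Ttrig // oppr0 !mxE mul0r.
move=> k; rewrite hZ linearD /= [col _ (A *m _)]col_mulmx [col _ (M *m _)]col_mulmx.
by rewrite col_sub1_mul_trmx mulmxDr mulmxDl addrA -scalemxAl -scalemxAr.
Qed.

Lemma coupled_rec_tends_to_0 n N (A M : 'M[F]_n) (S : 'M[F]_N)
    (Z : nat -> 'M[F]_(n, N)) :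
  (forall mu, eigenvalue S mu -> schur_stable (A + (1 - mu) *: M)) ->
  (forall k, Z k.+1 = A *m Z k + M *m (Z k *m (1%:M - S)^T)) -> mx_tends_to_0 Z.
Proof.
case: N => [|N] in S Z * => hS hZ; first by move=> i [].
have [P [T [Pu PS Ttrig Teig]]] := trigonalization S (ltn0Sn N).
have hPZ : mx_tends_to_0 (fun k => Z k *m P^T).
  apply: (trig_coupled_rec_tends_to_0 Ttrig (fun a => hS _ (Teig a))) => k.
  by rewrite hZ mulmxDl -!mulmxA -!trmx_mul mulmxBr mulmx1 PS mulmxBl mul1mx.
apply: mx_tends_to_0_ext (mx_tends_to_0_mulr (invmx P^T) hPZ) => k.
by rewrite -mulmxA mulmxV ?unitmx_tr // mulmx1.
Qed.

End StableRecurrences.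

Definition reduced_mx (R : pzRingType) N (D : 'M[R]_(1 + N)) : 'M[R]_N :=
  drsubmx D - const_mx 1 *m ursubmx D.

Lemma reduced_mxE (R : pzRingType) N (D : 'M[R]_(1 + N)) a b :
  reduced_mx D a b = D (lift ord0 a) (lift ord0 b) - D ord0 (lift ord0 b).
Proof.
rewrite !mxE big_ord1 !mxE mul1r.
by congr (D _ _ - D _ _); apply: val_inj.
Qed.

Lemma char_poly_conj (R : comUnitRingType) n (P M : 'M[R]_n) : P \in unitmx ->
  char_poly (P *m M *m invmx P) = char_poly M.
Proof.
move=> Pu; have PV : map_mx polyC P *m map_mx polyC (invmx P) = 1%:M.
  by rewrite -map_mxM mulmxV // map_mx1.
rewrite /char_poly; have -> : char_poly_mx (P *m M *m invmx P) =
    map_mx polyC P *m char_poly_mx M *m map_mx polyC (invmx P).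
  rewrite /char_poly_mx mulmxBr mulmxBl scalar_mxC -(mulmxA 'X%:M) PV mulmx1.
  by rewrite !map_mxM.
rewrite !det_mulmx mulrC mulrA -det_mulmx -map_mxM mulVmx //.
by rewrite map_mx1 det1 mul1r.
Qed.

Section RowStochastic.
Variables (R : fieldType) (N : nat) (D : 'M[R]_(1 + N)).
Hypothesis D_row_sum1 : forall i, \sum_j D i j = 1.

Let c : 'cV[R]_N := const_mx 1.

Lemma ulsubmx_row_sum1 : ulsubmx D + ursubmx D *m c = 1%:M.
Proof.
apply/matrixP => a b; rewrite !ord1 !mxE -(D_row_sum1 (lshift N 0)).
rewrite big_split_ord /= big_ord1; congr (_ + _).
by apply: eq_bigr => l _; rewrite !mxE mulr1.
Qed.

Lemma dlsubmx_row_sum1 : dlsubmx D + drsubmx D *m c = c.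
Proof.
apply/matrixP => a b; rewrite !ord1 !mxE -(D_row_sum1 (rshift 1 a)).
rewrite big_split_ord /= big_ord1; congr (_ + _).
by apply: eq_bigr => l _; rewrite !mxE mulr1.
Qed.

(* [S] maps node values y to y_0 and the differences y_i - y_0. *)
Let S : 'M[R]_(1 + N) := block_mx 1%:M 0 (- c) 1%:M.

Lemma row_stochastic_similar :
  S *m D = block_mx 1%:M (ursubmx D) 0 (reduced_mx D) *m S.
Proof.
have eDl : ulsubmx D = 1%:M - ursubmx D *m c.
  by rewrite -ulsubmx_row_sum1 addrK.
have eDdl : dlsubmx D = c - drsubmx D *m c.
  by rewrite -{1}dlsubmx_row_sum1 addrK.
rewrite -{1}[D]submxK /S !mulmx_block !mul1mx !mul0mx !mulmx1 ?mulmx0 ?add0r ?addr0.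
rewrite /reduced_mx mulmxN eDl eDdl; congr block_mx.
- rewrite mulNmx mulmxBr mulmx1 mulmxBl !mulmxA !mulmxN -/c.
  by rewrite opprB addrA subrK opprK addrC.
- by rewrite mulNmx addrC.
Qed.

Lemma char_poly_row_stochastic :
  char_poly D = ('X - 1%:P) * char_poly (reduced_mx D).
Proof.
have Su : S \in unitmx.
  suff /mulmx1_unit[] : S *m block_mx 1%:M 0 c 1%:M = 1%:M by [].
  rewrite mulmx_block !mul1mx !mul0mx !mulmx0 !mulmx1 !addr0 add0r addNr.
  by rewrite -scalar_mx_block.
rewrite -(char_poly_conj D Su) row_stochastic_similar mulmxK // /char_poly.
rewrite /char_poly_mx map_block_mx (scalar_mx_block 1 N 'X) opp_block_mx.
rewrite add_block_mx map_mx0 oppr0 add0r addr0 det_ublock; congr (_ * _).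
by rewrite map_scalar_mx det_mx11 !mxE.
Qed.

Lemma eigenvalue_row_stochastic_reduced (lam : 'I_N -> R) mu :
  char_poly D = ('X - 1%:P) * \prod_(i < N) ('X - (lam i)%:P) ->
  eigenvalue (reduced_mx D) mu -> exists i, mu = lam i.
Proof.
move=> chiD; rewrite eigenvalue_root_char.
have -> : char_poly (reduced_mx D) = \prod_(i < N) ('X - (lam i)%:P).
  by apply: (mulfI (negbT (polyXsubC_eq0 1))); rewrite -chiD char_poly_row_stochastic.
rewrite -(big_map lam xpredT (fun a => 'X - a%:P)) root_prod_XsubC.
by case/mapP => i _ ->; exists i.
Qed.

End RowStochastic.

Section RelativeCoordinates.
Variable R : comPzRingType.

Definition rel_mx n N (e : 'I_(1 + N) -> 'cV[R]_n) : 'M[R]_(n, N) :=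
  \matrix_(r, b) (e (lift ord0 b) - e ord0) r 0.

Lemma col_rel_mx n N (e : 'I_(1 + N) -> 'cV[R]_n) b :
  col b (rel_mx e) = e (lift ord0 b) - e ord0.
Proof. by apply/matrixP => r s; rewrite !mxE (ord1 s). Qed.

Lemma sum_laplacian_rel n N (D : 'M[R]_(1 + N)) (e : 'I_(1 + N) -> 'cV[R]_n) i :
  \sum_j D i j = 1 ->
  \sum_j D i j *: (e i - e j) =
  (e i - e ord0) - \sum_c D i (lift ord0 c) *: (e (lift ord0 c) - e ord0).
Proof.
move=> Drow; have shift (a b : 'cV[R]_n) : a - b = (a - e ord0) - (b - e ord0).
  by rewrite opprB subrKA.
under eq_bigr => j _ do rewrite (shift (e i)) scalerBr.
by rewrite sumrB -scaler_suml Drow scale1r big_ord_recl subrr scaler0 add0r.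
Qed.

Lemma rel_mx_rec n N (A M : 'M[R]_n) (D : 'M[R]_(1 + N))
    (e e' : 'I_(1 + N) -> 'cV[R]_n) :
  (forall i, \sum_j D i j = 1) ->
  (forall i, e' i = A *m e i + M *m \sum_j D i j *: (e i - e j)) ->
  rel_mx e' = A *m rel_mx e + M *m (rel_mx e *m (1%:M - reduced_mx D)^T).
Proof.
move=> Drow he; apply: eq_mx_col => b.
rewrite linearD /= [col _ (A *m _)]col_mulmx [col _ (M *m _)]col_mulmx.
rewrite col_mul_trmx !col_rel_mx.
have coef c : (1%:M - reduced_mx D) b c =
    (b == c)%:R - (D (lift ord0 b) (lift ord0 c) - D ord0 (lift ord0 c)).
  by rewrite -reduced_mxE !mxE.
under eq_bigr => c _ do rewrite coef col_rel_mx !scalerBl.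
rewrite !sumrB (bigD1 b) //= eqxx scale1r big1 ?addr0; last first.
  by move=> c /negbTE; rewrite eq_sym => ->; rewrite scale0r.
rewrite !he !sum_laplacian_rel // subrr sub0r mulmxN opprD opprK addrACA.
by rewrite -mulmxBr -mulmxDr opprB addrA addrAC.
Qed.

End RelativeCoordinates.

Lemma rel_mx_tends_to_0 (F : archiClosedFieldType) n N
    (e : nat -> 'I_(1 + N) -> 'cV[F]_n) :
  mx_tends_to_0 (fun k => rel_mx (e k)) ->
  forall i j, mx_tends_to_0 (fun k => e k i - e k j).
Proof.
move=> he.
have he0 i : mx_tends_to_0 (fun k => e k i - e k ord0).
  case: (unliftP ord0 i) => [b -> | ->] r s.
    by apply: tends_to_0_ext (he r b) => k; rewrite (ord1 s) !mxE.
  by apply: (@tends_to_0_eventually0 _ _ 0) => k _; rewrite subrr mxE.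
move=> i j; apply: mx_tends_to_0_ext (mx_tends_to_0B (he0 i) (he0 j)) => k.
by rewrite opprB addrA subrK.
Qed.

Lemma subrACA (V : zmodType) (a b c d : V) : (a - b) - (c - d) = (a - c) - (b - d).
Proof. by rewrite !opprB addrACA [RHS]addrACA (addrC (- b)). Qed.

Section Protocol.
Variables (F : archiClosedFieldType) (n p q N : nat).
Variables (A : 'M[F]_n) (B : 'M[F]_(n, p)) (C : 'M[F]_(q, n)).
Variables (K : 'M[F]_(p, n)) (L : 'M[F]_(n, q)) (D : 'M[F]_N).
Variables (x v : nat -> 'I_N -> 'cV[F]_n).
Hypothesis traj : protocol_traj A B C K L D x v.

Lemma observer_error_rec k i :
  v k.+1 i - x k.+1 i = A *m (v k i - x k i)
    + (L *m C) *m \sum_j D i j *: ((v k i - x k i) - (v k j - x k j)).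
Proof.
have [-> ->] := traj k i.
have -> : \sum_j D i j *: (C *m (v k i - v k j)) - \sum_j D i j *: (C *m x k i - C *m x k j)
    = C *m \sum_j D i j *: ((v k i - x k i) - (v k j - x k j)).
  rewrite -sumrB mulmx_sumr; apply: eq_bigr => j _.
  by rewrite -scalerBr -scalemxAr -!mulmxBr subrACA.
rewrite mulmxDl -mulmxA -(mulmxA L) addrAC opprD addrACA subrr addr0.
by rewrite -mulmxBr.
Qed.

Lemma state_diff_rec k i j :
  x k.+1 i - x k.+1 j = (A + B *m K) *m (x k i - x k j)
    + B *m K *m ((v k i - x k i) - (v k j - x k j)).
Proof.
have [-> _] := traj k i; have [-> _] := traj k j.
rewrite [in RHS]mulmxDl -[RHS]addrA -mulmxDr subrACA (addrC (x k i - x k j)) subrK.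
by rewrite opprD addrACA -!mulmxBr mulmxA.
Qed.

End Protocol.

Theorem corollary1 (F : archiClosedFieldType) (n p q N : nat)
    (A : 'M[F]_n) (B : 'M[F]_(n, p)) (C : 'M[F]_(q, n))
    (K : 'M[F]_(p, n)) (L : 'M[F]_(n, q))
    (E : rel 'I_N) (D : 'M[F]_N) (lam : 'I_N.-1 -> F) :
  real_mx A -> real_mx B -> real_mx C -> real_mx K -> real_mx L ->
  schur_stable (A + B *m K) ->
  has_spanning_tree E ->
  row_stochastic_of E D ->
  char_poly D = ('X - 1%:P) * \prod_(i < N.-1) ('X - (lam i)%:P) ->
  (forall i, `|lam i| < 1) ->
  (forall i, schur_stable (A + (1 - lam i) *: (L *m C))) ->
  forall x v : nat -> 'I_N -> 'cV[F]_n,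
    (forall i, real_mx (x 0%N i)) -> (forall i, real_mx (v 0%N i)) ->
    protocol_traj A B C K L D x v ->
    forall i j : 'I_N, tends_to_0 (fun k => vnorm (x k i - x k j)).
Proof.
case: N E D lam => [|N] E D lam; first by move=> _ _ _ _ _ _ _ _ _ _ _ x v _ _ _ [].
move=> _ _ _ _ _ stableABK _ [_ _ _ _ Drow] chiD _ stableS x v _ _ traj i j.
pose e k i := v k i - x k i.
have stable_rel mu : eigenvalue (@reduced_mx F N D) mu ->
    schur_stable (A + (1 - mu) *: (L *m C)).
  by case/(eigenvalue_row_stochastic_reduced Drow chiD) => l ->.
have rel_e : mx_tends_to_0 (fun k => rel_mx (e k)).
  apply: (coupled_rec_tends_to_0 stable_rel) => k.
  exact: rel_mx_rec Drow (observer_error_rec traj k).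
have diff_x : mx_tends_to_0 (fun k => x k i - x k j).
  apply: (schur_stable_rec_tends_to_0 stableABK (mx_tends_to_0_mull (B *m K) _)).
    exact: rel_mx_tends_to_0 rel_e i j.
  by move=> k; apply: state_diff_rec traj k i j.
exact: vnorm_tends_to_0 diff_x.
Qed.
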